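(* Let $T$ be a forest and $F$ a graph (both without roots), and let $\phi:V(T)\to V(F)$ be a local isomorphism. Then there exists a set $V\subseteq V(T)$ such that $\phi$ restricted to $V$ is a bijection onto $V(F)$ and the map $\phi^*$ restricted to $E_V(T)$ is injective.
   Context: A map $\phi:V(T)\to V(F)$ is a local isomorphism if it is surjective, maps every edge of $T$ to an edge of $F$ (i.e. $uv\in E(T)$ implies $\phi(u)\phi(v)\in E(F)$), and maps any two distinct edges of $T$ sharing a vertex to distinct edges of $F$. The induced map $\phi^*:E(T)\to E(F)$ sends $uv$ to $\phi(u)\phi(v)$. For $S\subseteq V(T)$, $E_S(T)$ is the set of edges of $T$ containing at least one vertex of $S$. *)

From mathcomp Require Import all_boot.
Set Implicit Arguments. Unset Strict Implicit. Unset Printing Implicit Defensive.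

Definition simple_graph (V : finType) (e : rel V) : Prop :=
  symmetric e /\ irreflexive e.

Definition forest (V : finType) (e : rel V) : Prop :=
  simple_graph e /\
  forall s : seq V, 3 <= size s -> uniq s -> ~~ cycle e s.

Definition edges (V : finType) (e : rel V) : {set {set V}} :=
  [set [set x.1; x.2] | x in [set x : V * V | e x.1 x.2]].

Definition edges_at (V : finType) (e : rel V) (S : {set V}) : {set {set V}} :=
  [set ed in edges e | ed :&: S != set0].

Definition edge_map (V W : finType) (phi : V -> W) (ed : {set V}) : {set W} :=
  phi @: ed.

Definition local_iso (V W : finType) (eT : rel V) (eF : rel W)
  (phi : V -> W) : Prop :=
  [/\ forall y : W, exists x : V, phi x = y,
      forall u v, eT u v -> eF (phi u) (phi v) &
      forall u v w, eT u v -> eT u w -> v != w ->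
        edge_map phi [set u; v] != edge_map phi [set u; w]].

From mathcomp Require Import all_boot zify.

Set Implicit Arguments. Unset Strict Implicit. Unset Printing Implicit Defensive.

(* Build V along a leaf-elimination order of the forest. For the processed
   vertex set S we keep V inside S, meeting every fibre of phi over S exactly
   once, and with no "crossed" pair of edges u1v1, u2v2 leaving V inside S
   (phi u1 = phi v2 and phi v1 = phi u2): once phi is injective on V, such a
   pair is the only way phi^* can identify two edges of E_V, all other
   coincidences being ruled out by local injectivity. To process a vertex x
   having at most one neighbour p among S: if its fibre is new, x joins V;
   otherwise, if p is in V, x replaces the representative of its fibre (the
   edges at x then stay inside V), and if p is not in V, V is kept (x is then
   not adjacent to V). *)

Section ForestLeaf.
Variables (V : finType) (e : rel V).
Hypotheses (e_sym : symmetric e) (e_irr : irreflexive e).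
Hypothesis e_acyclic : forall s : seq V, 3 <= size s -> uniq s -> ~~ cycle e s.

Definition branching (S : {set V}) :=
  forall x q, x \in S -> exists2 w, w \in S & e x w && (w != q).

(* A path starting in a branching set can always be prolonged inside it:
   a fresh neighbour extends the path, an old one would close a cycle. *)
Lemma branching_path_absurd (S : {set V}) : branching S ->
  forall (s : seq V) x y, uniq [:: x, y & s] -> path e x (y :: s) ->
  x \in S -> False.
Proof.
move=> S_br s x y; have [n] := ubnP (#|V| - size s).
elim: n s x y => // n IH s x y lt_n uniq_xys path_xys xS.
have size_xys : (size s).+2 <= #|V|.
  by have := max_card (mem [:: x, y & s]); move/card_uniqP: uniq_xys => ->.
have [w wS /andP [e_xw w_neq_y]] := S_br x y xS.
have [w_path | w_fresh] := boolP (w \in [:: x, y & s]); last first.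
  apply: (IH (y :: s) w x) => //=.
  - by move: #|V| lt_n size_xys => k; lia.
  - by rewrite w_fresh.
  - by rewrite (e_sym w) e_xw.
have w_neq_x : w != x by apply: contraTneq e_xw => ->; rewrite e_irr.
rewrite !inE (negPf w_neq_x) (negPf w_neq_y) /= in w_path.
move: path_xys uniq_xys; case/splitPr: w_path => p1 p2 path_xys uniq_xys.
have size_cyc : 3 <= size (x :: rcons (y :: p1) w) by rewrite /= size_rcons.
have uniq_cyc : uniq (x :: rcons (y :: p1) w).
  move: uniq_xys; rewrite -cat_cons -cat_rcons -cat_cons cat_uniq.
  by case/and3P.
move/negP: (e_acyclic size_cyc uniq_cyc); apply.
rewrite /cycle rcons_path rcons_path last_rcons (e_sym w) e_xw andbT.
by move: path_xys; rewrite -cat_cons cat_path => /andP [-> /= /andP [-> _]].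
Qed.

Lemma forest_leaf (S : {set V}) : S != set0 ->
  exists2 x, x \in S & exists p, forall w, w \in S -> e x w -> w = p.
Proof.
move=> /set0Pn [x0 x0S].
have [/exists_inP [x xS /existsP [p /forall_inP leaf_x]] | no_leaf] :=
  boolP [exists x in S, exists p, [forall w in S, e x w ==> (w == p)]].
  by exists x => //; exists p => w wS /(implyP (leaf_x w wS)) /eqP.
have S_br : branching S.
  move=> x q xS; move: no_leaf; rewrite negb_exists_in => /forall_inP /(_ x xS).
  rewrite negb_exists => /forallP /(_ q); rewrite negb_forall_in.
  by case/exists_inP => w wS; rewrite negb_imply; exists w.
have [y yS /andP [e_x0y _]] := S_br x0 x0 x0S.
exfalso.
apply: (branching_path_absurd S_br (s := [::]) (x := y) (y := x0)) => //=.
  by rewrite inE andbT; apply: contraTneq e_x0y => ->; rewrite e_irr.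
by rewrite e_sym e_x0y.
Qed.

End ForestLeaf.

Section Transversal.
Variables (VT VF : finType) (e : rel VT) (phi : VT -> VF).
Hypothesis e_sym : symmetric e.
Hypothesis phi_edge_neq : forall u v, e u v -> phi u != phi v.

Definition crossing_free (S V : {set VT}) :=
  forall u1 v1 u2 v2, u1 \in V -> u2 \in V ->
  v1 \in S :\: V -> v2 \in S :\: V -> e u1 v1 -> e u2 v2 ->
  phi u1 = phi v2 -> phi v1 = phi u2 -> False.

Definition good_transversal (S V : {set VT}) :=
  [/\ V \subset S, {in V &, injective phi}, phi @: V = phi @: S
    & crossing_free S V].

Lemma good_transversal0 : good_transversal set0 set0.
Proof. by split=> // [u v|u1 v1 u2 v2]; rewrite inE. Qed.

Lemma imset_setD1_redundant (S : {set VT}) x : x \in S ->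
  phi x \in phi @: (S :\ x) -> phi @: S = phi @: (S :\ x).
Proof.
move=> xS phi_x; rewrite -{1}(setD1K xS) imsetU1.
by apply/setUidPr; rewrite sub1set.
Qed.

Section Leaf.
Variables (S V : {set VT}) (x : VT).
Hypotheses (xS : x \in S) (good_V : good_transversal (S :\ x) V).

Let V_subS : V \subset S.
Proof.
by case: good_V => V_sub _ _ _; rewrite (subset_trans V_sub) ?subD1set.
Qed.

Lemma good_transversal_add : phi x \notin phi @: (S :\ x) ->
  good_transversal S (x |: V).
Proof.
move=> phi_x_new; case: good_V => V_sub phi_inj phi_V V_cf; split.
- by rewrite subUset sub1set xS V_subS.
- move=> u v; rewrite !inE => /predU1P [-> | uV] /predU1P [-> | vV] // phi_uv.
  + by move: phi_x_new; rewrite -phi_V phi_uv imset_f.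
  + by move: phi_x_new; rewrite -phi_V -phi_uv imset_f.
  + exact: phi_inj.
- by rewrite imsetU1 phi_V -imsetU1 setD1K.
move=> u1 v1 u2 v2; rewrite !in_setD !in_setU1 !negb_or.
move=> /predU1P [-> | u1V] /predU1P [-> | u2V] /andP [/andP [v1x v1V] v1S]
  /andP [/andP [v2x v2V] v2S] e1 e2 phi12 phi21.
- by move: phi_x_new; rewrite phi12 imset_f // !inE v2x.
- by move: phi_x_new; rewrite phi12 imset_f // !inE v2x.
- by move: phi_x_new; rewrite -phi21 imset_f // !inE v1x.
by apply: (V_cf u1 v1 u2 v2); rewrite // !inE ?v1x ?v2x ?v1V ?v2V.
Qed.

Variable p : VT.
Hypothesis x_leaf : forall w, w \in S -> e x w -> w = p.

Lemma good_transversal_swap u : p \in V -> u \in V -> phi x = phi u ->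
  good_transversal S (x |: V :\ u).
Proof.
move=> pV uV phi_xu; case: good_V => V_sub phi_inj phi_V V_cf.
have nbr_x_in_V v : v \in S -> e x v -> (v != u) && (v \in V).
  move=> vS e_xv; have v_p := x_leaf vS e_xv; rewrite v_p pV andbT -v_p.
  by apply: contra_neq (phi_edge_neq e_xv) => ->.
split.
- by rewrite subUset sub1set xS (subset_trans _ V_subS) ?subD1set.
- move=> a b; rewrite !inE => /predU1P [-> | /andP [au aV]]
    /predU1P [-> | /andP [bu bV]] // phi_ab.
  + by move: bu; rewrite -(phi_inj u b uV bV) ?eqxx // -phi_xu.
  + by move: au; rewrite (phi_inj a u aV uV) ?eqxx // -phi_xu.
  + exact: phi_inj.
- rewrite imsetU1 phi_xu -imsetU1 setD1K // phi_V.
  by rewrite (imset_setD1_redundant xS) // -phi_V phi_xu imset_f.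
move=> u1 v1 u2 v2; rewrite !in_setD !in_setU1 !in_setD1 !negb_or.
move=> /predU1P [-> | /andP [u1u u1V]] /predU1P [-> | /andP [u2u u2V]]
  /andP [/andP [v1x v1V] v1S] /andP [/andP [v2x v2V] v2S] e1 e2 phi12 phi21.
- by rewrite nbr_x_in_V in v1V.
- by rewrite nbr_x_in_V in v1V.
- by rewrite nbr_x_in_V in v2V.
have v1_notin_V : v1 \notin V.
  apply: contraNN v1V => v1V'; rewrite v1V' andbT.
  by apply: contra_neq u2u => v1u; rewrite -v1u (phi_inj v1 u2).
have v2_notin_V : v2 \notin V.
  apply: contraNN v2V => v2V'; rewrite v2V' andbT.
  by apply: contra_neq u1u => v2u; rewrite -v2u (phi_inj u1 v2).
by apply: (V_cf u1 v1 u2 v2); rewrite // !inE ?v1x ?v2x ?v1_notin_V ?v2_notin_V.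
Qed.

Lemma good_transversal_keep : p \notin V -> phi x \in phi @: (S :\ x) ->
  good_transversal S V.
Proof.
move=> pV phi_x_old; case: good_V => V_sub phi_inj phi_V V_cf.
split=> //; first by rewrite (imset_setD1_redundant xS).
move=> u1 v1 u2 v2 u1V u2V /setDP [v1S v1V] /setDP [v2S v2V] e1 e2.
have v_neq_x u v : u \in V -> e u v -> v != x.
  move=> uV e_uv; apply: contraNneq pV => v_x.
  have e_xu : e x u by rewrite e_sym -v_x.
  by rewrite -(x_leaf (subsetP V_subS u uV) e_xu).
apply: (V_cf u1 v1 u2 v2) => //; rewrite !inE ?v1V ?v2V.
  by rewrite (v_neq_x u1 v1).
by rewrite (v_neq_x u2 v2).
Qed.
End Leaf.

Hypothesis e_irr : irreflexive e.
Hypothesis e_acyclic : forall s : seq VT, 3 <= size s -> uniq s -> ~~ cycle e s.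

Lemma exists_good_transversal (S : {set VT}) : exists V, good_transversal S V.
Proof.
have [n] := ubnP #|S|; elim: n S => // n IH S S_lt.
have [-> | S_neq0] := eqVneq S set0.
  by exists set0; apply: good_transversal0.
have [x xS [p x_leaf]] := forest_leaf e_sym e_irr e_acyclic S_neq0.
have [|V good_V] := IH (S :\ x); first by move: S_lt; rewrite (cardsD1 x S) xS.
have [phi_x_old | phi_x_new] := boolP (phi x \in phi @: (S :\ x)); last first.
  by exists (x |: V); apply: good_transversal_add.
have [pV | pV] := boolP (p \in V); last first.
  by exists V; apply: (good_transversal_keep xS good_V x_leaf).
have [u uV phi_xu] : exists2 u, u \in V & phi x = phi u.
  by apply/imsetP; case: good_V => _ _ ->.
by exists (x |: V :\ u); apply: (good_transversal_swap xS good_V x_leaf).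
Qed.

End Transversal.

Lemma set2_eq_cases (T : finType) (a b c d : T) :
  [set a; b] = [set c; d] -> a != b -> (a = c /\ b = d) \/ (a = d /\ b = c).
Proof.
move=> eq_ab_cd a_neq_b.
have : a \in [set c; d] by rewrite -eq_ab_cd set21.
have : b \in [set c; d] by rewrite -eq_ab_cd set22.
rewrite !inE => /orP [] /eqP b_eq /orP [] /eqP a_eq; subst a b;
  by [left | right | rewrite eqxx in a_neq_b].
Qed.

Lemma edges_at_oriented (V : finType) (e : rel V) (S : {set V}) ed :
  symmetric e -> ed \in edges_at e S ->
  exists u v, [/\ ed = [set u; v], e u v & u \in S].
Proof.
move=> e_sym; rewrite inE => /andP [/imsetP [[u v]]].
rewrite inE /= => e_uv -> /set0Pn [w].
rewrite !inE => /andP [/orP [] /eqP -> wS].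
- by exists u, v.
- by exists v, u; rewrite e_sym e_uv setUC.
Qed.

Lemma edge_map_inj_edges_at (VT VF : finType) (e : rel VT) (phi : VT -> VF)
    (V : {set VT}) :
  symmetric e -> (forall u v, e u v -> phi u != phi v) ->
  (forall u v w, e u v -> e u w -> phi v = phi w -> v = w) ->
  {in V &, injective phi} -> crossing_free e phi [set: VT] V ->
  {in edges_at e V &, injective (edge_map phi)}.
Proof.
move=> e_sym phi_edge_neq phi_nbr_inj phi_inj V_cf ed1 ed2.
move=> /(edges_at_oriented e_sym) [u1 [v1 [-> e1 u1V]]].
move=> /(edges_at_oriented e_sym) [u2 [v2 [-> e2 u2V]]].
rewrite /edge_map !imsetU1 !imset_set1 => /set2_eq_cases.
case/(_ (phi_edge_neq _ _ e1)) => [[phi_u12 phi_v12] | [phi12 phi21]].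
  have u12 := phi_inj _ _ u1V u2V phi_u12; subst u2.
  by rewrite (phi_nbr_inj _ _ _ e1 e2 phi_v12).
have [v1V | v1_notin_V] := boolP (v1 \in V).
  have v1_u2 := phi_inj _ _ v1V u2V phi21; subst v1.
  rewrite e_sym in e1; rewrite (phi_nbr_inj _ _ _ e1 e2 phi12).
  by rewrite setUC.
have [v2V | v2_notin_V] := boolP (v2 \in V).
  have u1_v2 := phi_inj _ _ u1V v2V phi12; subst v2.
  rewrite e_sym in e2; rewrite (phi_nbr_inj _ _ _ e1 e2 phi21).
  by rewrite setUC.
by case: (V_cf u1 v1 u2 v2); rewrite ?inE ?v1_notin_V ?v2_notin_V.
Qed.

Section LocalIso.
Variables (VT VF : finType) (eT : rel VT) (eF : rel VF) (phi : VT -> VF).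
Hypothesis phi_li : local_iso eT eF phi.

Lemma local_iso_imsetT : phi @: [set: VT] = [set: VF].
Proof.
case: phi_li => phi_surj _ _; apply/setP => y; rewrite inE.
by have [x <-] := phi_surj y; rewrite imset_f ?inE.
Qed.

Lemma local_iso_edge_neq : irreflexive eF ->
  forall u v, eT u v -> phi u != phi v.
Proof.
case: phi_li => _ phi_hom _ eF_irr u v /phi_hom.
by apply: contraTneq => ->; rewrite eF_irr.
Qed.

Lemma local_iso_nbr_inj u v w : eT u v -> eT u w -> phi v = phi w -> v = w.
Proof.
case: phi_li => _ _ phi_edges e_uv e_uw phi_vw.
have [// | v_neq_w] := eqVneq v w.
move: (phi_edges u v w e_uv e_uw v_neq_w).
by rewrite /edge_map !imsetU1 !imset_set1 phi_vw eqxx.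
Qed.

End LocalIso.

Theorem lemma5p1 (VT VF : finType) (eT : rel VT) (eF : rel VF)
  (phi : VT -> VF) :
  forest eT -> simple_graph eF -> local_iso eT eF phi ->
  exists V : {set VT},
    [/\ {in V &, injective phi}, phi @: V = [set: VF] &
        {in edges_at eT V &, injective (edge_map phi)}].
Proof.
move=> [[eT_sym eT_irr] eT_acyclic] [_ eF_irr] phi_li.
have phi_edge_neq := local_iso_edge_neq phi_li eF_irr.
have [V [_ phi_inj phi_V V_cf]] :=
  exists_good_transversal eT_sym phi_edge_neq eT_irr eT_acyclic [set: VT].
exists V; split=> //; first by rewrite phi_V (local_iso_imsetT phi_li).
exact: edge_map_inj_edges_at eT_sym phi_edge_neq (local_iso_nbr_inj phi_li)
  phi_inj V_cf.
Qed.
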